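(* Under the standing assumptions in the context, let $v\in S$ and for an integer $i$ let $A_v^i$ be the set of simple graphs on $[n]$ with degree sequence $\mathbf d$ in which $v$ has exactly $i$ neighbours in $S$. Then for integers $0\le i<d(v)$, $$\frac{|A_v^i|}{|A_v^{i+1}|}=\frac{i+1}{d(v)-i}\cdot\frac{d(\bar S)}{d(S)}\left(1+O\!\left(\frac{\Delta^2}{d(S)}\right)\right).$$
   Context: All asymptotics are as $n\to\infty$. For each $n$, $\mathbf d=(d(1),\dots,d(n))$ is a sequence of integers with $1\le d(1)\le\dots\le d(n)$ and even sum; $M=\sum_i d(i)$, $\Delta=d(n)$, $d(A)=\sum_{i\in A}d(i)$. $S\subseteq[n]$ is a given set, $\bar S=[n]\setminus S$, $\gamma=d(S)/M$. Standing assumptions: there is $\delta=\delta(n)\to0$ with $\delta^{-1}=O(\log\log M)$ and $\Delta^2(\gamma^{-1}\log M)^{12}\le\delta\,d(S)$, and a constant $c>0$ with $\gamma<1-c$. *)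

From mathcomp Require Import all_boot.
From Stdlib Require Import Reals.
Set Implicit Arguments. Unset Strict Implicit. Unset Printing Implicit Defensive.

Definition simple_graph (n : nat) (E : {set {set 'I_n}}) : bool :=
  [forall e in E, #|e| == 2].

Definition deg (n : nat) (E : {set {set 'I_n}}) (v : 'I_n) : nat :=
  #|[set e in E | v \in e]|.

Definition has_degseq (n : nat) (E : {set {set 'I_n}}) (d : 'I_n -> nat) : bool :=
  [forall v, deg E v == d v].

Definition nbrs_in (n : nat) (E : {set {set 'I_n}}) (v : 'I_n) (S : {set 'I_n}) : nat :=
  #|[set u in S | [set u; v] \in E]|.

Definition A_set (n : nat) (d : 'I_n -> nat) (S : {set 'I_n}) (v : 'I_n) (i : nat)
  : {set {set {set 'I_n}}} :=
  [set E : {set {set 'I_n}} | [&& simple_graph E, has_degseq E d & nbrs_in E v S == i]].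

Definition dsum (n : nat) (d : 'I_n -> nat) (A : {set 'I_n}) : nat :=
  (\sum_(i in A) d i)%N.

Definition Mtot (n : nat) (d : 'I_n -> nat) : nat := (\sum_(i : 'I_n) d i)%N.

(* Delta = maximum degree (= d(n) for a nondecreasing sequence) *)
Definition Dmax (n : nat) (d : 'I_n -> nat) : nat := (\max_(i : 'I_n) d i)%N.

Definition valid_degseq (n : nat) (d : 'I_n -> nat) : Prop :=
  (forall i : 'I_n, (1 <= d i)%N) /\
  (forall i j : 'I_n, (i <= j)%N -> (d i <= d j)%N) /\
  ~~ odd (Mtot d).

(** A switching at [v] removes two edges [v a] and [b y], with [a] outside
    and [b] inside [S], and inserts [v b] and [a y].  It keeps the degree
    sequence and moves a graph from [A_v^i] to [A_v^(i+1)].  A graph of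
    [A_v^i] admits between [(d(v)-i)(d(S) - 4 Delta^2)] and [(d(v)-i) d(S)]
    switchings: a choice of a neighbour [a] of [v] outside [S], of [b] in [S]
    and of a neighbour [y] of [b] fails only if [b] is [v] or a neighbour of
    [v], or [y] is [a] or a neighbour of [a].  Symmetrically, a graph of
    [A_v^(i+1)] is reached by between [(i+1)(d(S^c) - 4 Delta^2)] and
    [(i+1) d(S^c)] switchings.  Double counting compares [|A_v^i|] and
    [|A_v^(i+1)|] up to a factor [1 + O(Delta^2/d(S) + Delta^2/d(S^c))], and
    the standing assumptions give [8 Delta^2 <= d(S)] and [d(S^c) >= c d(S)]
    for large [n]. *)

From mathcomp Require Import all_boot zify.
From Stdlib Require Import Lra Psatz Reals.
Set Implicit Arguments. Unset Strict Implicit. Unset Printing Implicit Defensive.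

Lemma sum_mem (T : finType) (A : {pred T}) : \sum_x (x \in A : nat) = #|A|.
Proof. by rewrite -sum1_card [RHS]big_mkcond; apply: eq_bigr => x _; case: (x \in A). Qed.

Lemma uniq4_swap23 (T : eqType) (x1 x2 x3 x4 : T) :
  uniq [:: x1; x2; x3; x4] = uniq [:: x1; x3; x2; x4].
Proof. by rewrite /= !inE !negb_or [x3 == x2]eq_sym; do !case: (_ == _). Qed.

Lemma uniq4_neq (T : eqType) (x1 x2 x3 x4 : T) : uniq [:: x1; x2; x3; x4] ->
  [/\ x1 != x2, x1 != x3, x1 != x4 & [/\ x2 != x3, x2 != x4 & x3 != x4]].
Proof. by rewrite /= !inE !negb_or => /and4P[/and3P[-> -> ->] /andP[-> ->] -> _]. Qed.

Section EdgeExchange.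
Variable n : nat.
Implicit Types (G H A B : {set {set 'I_n}}) (u v y : 'I_n).

Definition nbhd G u : {set 'I_n} := [set y | [set u; y] \in G].

Lemma nbhd_sym G u y : (y \in nbhd G u) = (u \in nbhd G y).
Proof. by rewrite !inE setUC. Qed.

Lemma nbrs_inE G v X : nbrs_in G v X = #|nbhd G v :&: X|.
Proof. by apply: eq_card => u; rewrite !inE setUC andbC. Qed.

Lemma simple_graph_card2 G e : simple_graph G -> e \in G -> #|e| = 2.
Proof. by move=> /forall_inP sG /sG /eqP. Qed.

Lemma simple_nbhd_neq G u y : simple_graph G -> y \in nbhd G u -> u != y.
Proof.
move=> sG; rewrite inE => /(simple_graph_card2 sG).
by case: eqP => // <-; rewrite setUid cards1.
Qed.

Lemma edge_inj u : injective (fun y => [set u; y]).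
Proof.
move=> y1 y2 /= eq12; have := set22 u y1; rewrite eq12 => /set2P[y1u|//].
by have := set22 u y2; rewrite -eq12 y1u setUid => /set1P.
Qed.

Lemma set2_neq_l (w p q u : 'I_n) : w != p -> w != q -> [set w; u] != [set p; q].
Proof. by move=> wp wq; apply: contraTneq (set21 w u) => ->; rewrite !inE negb_or wp. Qed.

Lemma deg_nbhd G u : simple_graph G -> deg G u = #|nbhd G u|.
Proof.
move=> sG; rewrite /deg -(card_imset _ (@edge_inj u)); apply: eq_card => e; rewrite inE.
apply/andP/imsetP => [[eG ue] | [y]]; last by rewrite inE => yG ->; rewrite set21.
have /eqP/cards2P[a [b [_ eab]]] := simple_graph_card2 sG eG.
move: ue eG; rewrite eab => /set2P[]-> eG; first by exists b; rewrite ?inE.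
by exists a; rewrite ?inE setUC.
Qed.

Lemma nbrs_in_setC G u X :
  simple_graph G -> nbrs_in G u X + nbrs_in G u (~: X) = deg G u.
Proof. by move=> sG; rewrite !nbrs_inE deg_nbhd // -(cardsID X (nbhd G u)) setDE. Qed.

Lemma degU G H u : [disjoint G & H] -> deg (G :|: H) u = deg G u + deg H u.
Proof.
move=> dGH; rewrite /deg -cardsUI.
have -> : [set e in G :|: H | u \in e] = [set e in G | u \in e] :|: [set e in H | u \in e].
  by apply/setP => e; rewrite !inE andb_orl.
suff -> : [set e in G | u \in e] :&: [set e in H | u \in e] = set0 by rewrite cards0 addn0.
apply/setP => e; rewrite !inE; case: (boolP (e \in G)) => //= eG.
by rewrite (disjointFr dGH eG) andbF.
Qed.

Lemma deg_set1 (e : {set 'I_n}) u : deg [set e] u = (u \in e : nat).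
Proof.
rewrite /deg; case: (boolP (u \in e)) => ue.
  suff -> : [set f in [set e] | u \in f] = [set e] by rewrite cards1.
  by apply/setP => f; rewrite !inE; case: eqP => // ->.
suff -> : [set f in [set e] | u \in f] = set0 by rewrite cards0.
by apply/setP => f; rewrite !inE; case: eqP => // ->; rewrite (negbTE ue).
Qed.

Lemma deg_set2 (e1 e2 : {set 'I_n}) u :
  e1 != e2 -> deg [set e1; e2] u = (u \in e1) + (u \in e2).
Proof. by move=> ne12; rewrite degU ?deg_set1 // disjoints1 inE. Qed.

Definition exchange G A B := (G :\: A) :|: B.

Lemma exchangeK G A B :
  A \subset G -> [disjoint B & G] -> exchange (exchange G A B) B A = G.
Proof.
move=> AG dBG; apply/setP => e; rewrite !inE.
have [eA|eA] := boolP (e \in A); first by rewrite orbT (subsetP AG).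
have [eB|eB] /= := boolP (e \in B); first by rewrite (disjointFr dBG eB).
by rewrite !orbF.
Qed.

Lemma exchange_disjoint G A B :
  A \subset G -> [disjoint B & G] -> [disjoint A & exchange G A B].
Proof.
move=> AG dBG; rewrite -setI_eq0; apply/eqP/setP => e; rewrite !inE.
case: (boolP (e \in A)) => //= eA.
by rewrite (disjointFl dBG (subsetP AG _ eA)).
Qed.

Lemma simple_exchange G A B :
  simple_graph G -> simple_graph B -> simple_graph (exchange G A B).
Proof.
move=> /forall_inP sG /forall_inP sB; apply/forall_inP => e.
by rewrite !inE => /orP[/andP[_ /sG] | /sB].
Qed.

Lemma deg_exchange G A B u : A \subset G -> [disjoint B & G] ->
  deg A u = deg B u -> deg (exchange G A B) u = deg G u.
Proof.
move=> AG dBG degAB; have dGA_A : [disjoint G :\: A & A].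
  by rewrite -setI_eq0 setDE -setIA [~: A :&: A]setIC setICr setI0.
have dGA_B : [disjoint G :\: A & B].
  by rewrite disjoint_sym; apply: disjointWr dBG; apply: subsetDl.
have splitG : (G :\: A) :|: A = G by rewrite setUC -{2}(setID G A) (setIidPr AG).
by rewrite degU // -degAB -degU // splitG.
Qed.
End EdgeExchange.

Section Switching.
Variables (n : nat) (v : 'I_n).
Implicit Types (G : {set {set 'I_n}}) (X : {set 'I_n}) (a b y u : 'I_n).

Definition edge_pair a b y : {set {set 'I_n}} := [set [set v; a]; [set b; y]].

Definition switch G a b y := exchange G (edge_pair a b y) (edge_pair b a y).

(* The forward switchings of the paper are [switching S]; the backward ones,
   which undo them, are [switching (~: S)] with [a] and [b] exchanged. *)
Definition switching X G a b y :=
  [&& uniq [:: v; a; b; y], a \notin X, b \in X,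
      edge_pair a b y \subset G & [disjoint edge_pair b a y & G]].

Lemma switchingE X G a b y : switching X G a b y =
  [&& uniq [:: v; a; b; y], a \notin X, b \in X, [set v; a] \in G, [set b; y] \in G,
      [set v; b] \notin G & [set a; y] \notin G].
Proof. by rewrite /switching disjoints_subset !subUset !sub1set !inE -!andbA. Qed.

Lemma deg_edge_pair a b y u : uniq [:: v; a; b; y] ->
  deg (edge_pair a b y) u = (u == v) + (u == a) + ((u == b) + (u == y)).
Proof.
move=> /uniq4_neq[va vb vy [_ ay b_y]].
have set2_nat p q : p != q -> ((u \in [set p; q]) : nat) = (u == p) + (u == q).
  by move=> pq; rewrite !inE; case: eqP => [->|//]; rewrite (negbTE pq).
by rewrite deg_set2 ?set2_neq_l // !set2_nat.
Qed.

Lemma switchingK X G a b y : switching X G a b y ->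
  switching (~: X) (switch G a b y) b a y /\ switch (switch G a b y) b a y = G.
Proof.
case/and5P=> uq aX bX sub dis; split; last exact: exchangeK.
by rewrite /switching -uniq4_swap23 uq !inE bX aX subsetUr exchange_disjoint.
Qed.

Lemma simple_switch X G a b y :
  simple_graph G -> switching X G a b y -> simple_graph (switch G a b y).
Proof.
move=> sG /and5P[/uniq4_neq[_ vb _ [_ ay _]] _ _ _ _].
by apply: simple_exchange => //; apply/forall_inP => e /set2P[]->; rewrite cards2 ?vb ?ay.
Qed.

Lemma deg_switch X G a b y u :
  switching X G a b y -> deg (switch G a b y) u = deg G u.
Proof.
case/and5P=> uq _ _ sub dis; apply: deg_exchange => //.
have uq' : uniq [:: v; b; a; y] by rewrite -uniq4_swap23.
by rewrite !deg_edge_pair // addnACA [(u == a) + _]addnC addnACA.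
Qed.

Lemma nbhd_switch X G a b y : switching X G a b y ->
  nbhd (switch G a b y) v = b |: (nbhd G v :\ a).
Proof.
case/and5P=> /uniq4_neq[va vb vy _] _ _ _ _; apply/setP => u.
rewrite !inE !(inj_eq (@edge_inj _ v)) !(negbTE (set2_neq_l _ _ _)) //.
by rewrite !orbF orbC.
Qed.

Lemma nbrs_in_switch X G a b y :
  switching X G a b y -> nbrs_in (switch G a b y) v X = (nbrs_in G v X).+1.
Proof.
move=> sw; move: (sw); rewrite switchingE => /and5P[_ aX bX _ /and3P[_ vbG _]].
rewrite !nbrs_inE (nbhd_switch sw).
have -> : (b |: (nbhd G v :\ a)) :&: X = b |: (nbhd G v :&: X).
  apply/setP => u; rewrite !inE; case: eqVneq => [->|_] //=.
  by case: eqVneq => [->|] //=; rewrite (negbTE aX) andbF.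
by rewrite cardsU1 !inE (negbTE vbG).
Qed.

Definition switchings X G := \sum_a \sum_b \sum_y (switching X G a b y : nat).
End Switching.

Section SwitchingCount.
Variables (n : nat) (v : 'I_n) (X : {set 'I_n}) (G : {set {set 'I_n}}) (D : nat).
Hypotheses (sG : simple_graph G) (nbhd_le : forall u, #|nbhd G u| <= D).
Implicit Types (a b y : 'I_n) (B : {set 'I_n}).

Lemma sum_arcs_from B :
  \sum_b \sum_y (b \in B) * (y \in nbhd G b) = \sum_(b in B) #|nbhd G b|.
Proof.
rewrite [RHS]big_mkcond; apply: eq_bigr => b _.
by rewrite -big_distrr /= sum_mem mulnbl.
Qed.

Lemma sum_arcs_to B :
  \sum_b \sum_y (y \in B) * (y \in nbhd G b) = \sum_(y in B) #|nbhd G y|.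
Proof.
rewrite exchange_big -sum_arcs_from; do 2 (apply: eq_bigr => ? _).
by rewrite nbhd_sym.
Qed.

Lemma sum_nbhd_le B : \sum_(b in B) #|nbhd G b| <= #|B| * D.
Proof. by rewrite -sum_nat_const; apply: leq_sum => b _. Qed.

Lemma switching_candidate a b y : switching v X G a b y ->
  [&& a \in nbhd G v :\: X, b \in X & y \in nbhd G b].
Proof. by rewrite switchingE !inE => /and5P[_ -> -> -> /andP[->]]. Qed.

Lemma candidate_switching a b y : a \in nbhd G v :\: X -> b \in X -> y \in nbhd G b ->
  b \notin v |: nbhd G v -> y \notin a |: nbhd G a -> switching v X G a b y.
Proof.
move=> /setDP[va aX] bX yb; rewrite !inE !negb_or => /andP[bv vbNG] /andP[ya ayNG].
have vy : v != y by apply: contraNneq vbNG => ->; move: yb; rewrite inE setUC.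
have ab : a != b by apply: contraNneq aX => ->.
have [vNa bNy] := (simple_nbhd_neq sG va, simple_nbhd_neq sG yb).
rewrite !inE in va yb.
rewrite switchingE /= !inE !negb_or [v == b]eq_sym [a == y]eq_sym.
by rewrite vNa bv vy ab ya bNy aX bX va yb vbNG ayNG.
Qed.

Lemma switchings_from_le a :
  \sum_b \sum_y (switching v X G a b y : nat) <= \sum_(b in X) #|nbhd G b|.
Proof.
rewrite -sum_arcs_from; apply: leq_sum => b _; apply: leq_sum => y _.
by case: (boolP (switching _ _ _ _ _ _)) => // /switching_candidate/and3P[_ -> ->].
Qed.

Lemma switchings_from_ge a : a \in nbhd G v :\: X ->
  \sum_(b in X) #|nbhd G b| <= \sum_b \sum_y (switching v X G a b y : nat) + 4 * D ^ 2.
Proof.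
move=> aW; have candidate_bound b y : (b \in X) * (y \in nbhd G b) <= switching v X G a b y
    + (b \in v |: nbhd G v) * (y \in nbhd G b) + (y \in a |: nbhd G a) * (y \in nbhd G b).
  rewrite !mulnb; case: (boolP (b \in X)) => //= bX; case: (boolP (y \in _)) => //= yb.
  rewrite !andbT; case: (boolP (b \in _)) => [_|bv]; first by rewrite addnAC leq_addl.
  case: (boolP (y \in _)) => [_|ya]; first by rewrite leq_addl.
  by rewrite candidate_switching.
rewrite -sum_arcs_from; apply: leq_trans (_ : _ <= \sum_b \sum_y (switching v X G a b y
    + (b \in v |: nbhd G v) * (y \in nbhd G b) + (y \in a |: nbhd G a) * (y \in nbhd G b))) _.
  by apply: leq_sum => b _; apply: leq_sum => y _.
under eq_bigr => b _ do rewrite !big_split /=.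
rewrite !big_split /= sum_arcs_from sum_arcs_to -addnA leq_add2l.
have closed_le u : #|u |: nbhd G u| <= D.+1 by rewrite cardsU1 -add1n leq_add ?leq_b1.
apply: leq_trans (leq_add (sum_nbhd_le _) (sum_nbhd_le _)) _.
apply: leq_trans (leq_add (leq_mul (closed_le v) (leqnn D)) (leq_mul (closed_le a) (leqnn D))) _.
have : D <= D * D by case: (D) => // k; rewrite leq_pmulr.
nia.
Qed.

Lemma switchingsE : switchings v X G =
  \sum_(a in nbhd G v :\: X) \sum_b \sum_y (switching v X G a b y : nat).
Proof.
rewrite [RHS]big_mkcond; apply: eq_bigr => a _; case: ifP => // aW.
apply: big1 => b _; apply: big1 => y _.
by case: (boolP (switching _ _ _ _ _ _)) => // /switching_candidate; rewrite aW.
Qed.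

Lemma switchings_le :
  switchings v X G <= #|nbhd G v :\: X| * \sum_(b in X) #|nbhd G b|.
Proof.
by rewrite switchingsE -sum_nat_const; apply: leq_sum => a _; apply: switchings_from_le.
Qed.

Lemma switchings_ge : #|nbhd G v :\: X| * \sum_(b in X) #|nbhd G b| <=
  switchings v X G + #|nbhd G v :\: X| * (4 * D ^ 2).
Proof.
rewrite switchingsE -!sum_nat_const -big_split.
by apply: leq_sum => a aW; apply: switchings_from_ge.
Qed.
End SwitchingCount.

Lemma sum_count_exchange (I J : finType) (B : {set J}) (P : I -> I -> I -> pred J) :
  \sum_(G in B) \sum_a \sum_b \sum_y (P a b y G : nat) =
  \sum_a \sum_b \sum_y #|[set G in B | P a b y G]|.
Proof.
rewrite exchange_big; apply: eq_bigr => a _; rewrite exchange_big; apply: eq_bigr => b _.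
rewrite exchange_big; apply: eq_bigr => y _.
by rewrite -sum_mem [LHS]big_mkcond; apply: eq_bigr => G _; rewrite inE; case: (G \in B).
Qed.

Section DoubleCounting.
Variables (n : nat) (d : 'I_n -> nat) (S : {set 'I_n}) (v : 'I_n).
Implicit Types (G H : {set {set 'I_n}}) (a b y : 'I_n).

Local Notation A i := (A_set d S v i).

Lemma A_set_nbhd G i u : G \in A i -> #|nbhd G u| = d u.
Proof. by rewrite inE => /and3P[sG /forallP dG _]; rewrite -deg_nbhd // (eqP (dG u)). Qed.

Lemma switch_degseq X G a b y : simple_graph G -> has_degseq G d ->
  switching v X G a b y -> simple_graph (switch v G a b y) && has_degseq (switch v G a b y) d.
Proof.
move=> sG /forallP dG sw; rewrite (simple_switch sG sw).
by apply/forallP => u; rewrite (deg_switch _ sw).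
Qed.

Lemma A_set_switch G a b y i :
  G \in A i -> switching v S G a b y -> switch v G a b y \in A i.+1.
Proof.
rewrite !inE => /and3P[sG dG /eqP nG] sw.
by have /andP[-> ->] := switch_degseq sG dG sw; rewrite (nbrs_in_switch sw) nG /=.
Qed.

Lemma A_set_switch_back H a b y i :
  H \in A i.+1 -> switching v (~: S) H a b y -> switch v H a b y \in A i.
Proof.
rewrite !inE => /and3P[sH dH /eqP nH] sw.
have /andP[sK dK] := switch_degseq sH dH sw; rewrite sK dK /=.
have := nbrs_in_setC v S sK; have := nbrs_in_setC v S sH.
rewrite (deg_switch _ sw) (nbrs_in_switch sw) nH => *; apply/eqP; lia.
Qed.

Lemma card_switching_graphs a b y i :
  #|[set G in A i | switching v S G a b y]| =
  #|[set H in A i.+1 | switching v (~: S) H b a y]|.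
Proof.
rewrite -(@card_in_imset _ _ (fun G => switch v G a b y)); last first.
  move=> G1 G2; rewrite !inE => /andP[_ sw1] /andP[_ sw2] /= eq12.
  by rewrite -(switchingK sw1).2 eq12 (switchingK sw2).2.
apply: eq_card => H; apply/imsetP/idP => [[G] | ].
  rewrite inE => /andP[GA sw] ->; rewrite inE A_set_switch //; exact: (switchingK sw).1.
rewrite inE => /andP[HA sw]; have [sw' switchK] := switchingK sw.
exists (switch v H b a y); last by rewrite switchK.
by rewrite inE A_set_switch_back // -[S]setCK.
Qed.

Lemma double_count i :
  \sum_(G in A i) switchings v S G = \sum_(H in A i.+1) switchings v (~: S) H.
Proof.
rewrite /switchings !sum_count_exchange [RHS]exchange_big.
do 3 (apply: eq_bigr => ? _); exact: card_switching_graphs.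
Qed.

Lemma card_nbhd_setD G i : G \in A i -> #|nbhd G v :\: S| = d v - i.
Proof.
move=> GA; rewrite -(A_set_nbhd v GA) -(cardsID S (nbhd G v)) -nbrs_inE.
by move: GA; rewrite inE => /and3P[_ _ /eqP->]; rewrite addKn.
Qed.

Lemma card_nbhd_setDC H i : H \in A i -> #|nbhd H v :\: ~: S| = i.
Proof. by rewrite inE setDE setCK -nbrs_inE => /and3P[_ _ /eqP]. Qed.

Lemma sum_switchings_bounds X j p :
  (forall G, G \in A j -> #|nbhd G v :\: X| = p) ->
  \sum_(G in A j) switchings v X G <= #|A j| * (p * dsum d X) /\
  #|A j| * (p * dsum d X) <=
    \sum_(G in A j) switchings v X G + #|A j| * (p * (4 * Dmax d ^ 2)).
Proof.
move=> card_W; have nbhd_le G u : G \in A j -> #|nbhd G u| <= Dmax d.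
  by move=> GA; rewrite (A_set_nbhd u GA) leq_bigmax.
have dsumE G : G \in A j -> \sum_(b in X) #|nbhd G b| = dsum d X.
  by move=> GA; apply: eq_bigr => b _; apply: A_set_nbhd GA.
rewrite -!sum_nat_const; split; last rewrite -big_split; apply: leq_sum => G GA.
  by rewrite -(card_W G GA) -(dsumE G GA) switchings_le.
have sG : simple_graph G by move: GA; rewrite inE => /and3P[].
by rewrite -(card_W G GA) -(dsumE G GA) switchings_ge // => u; apply: nbhd_le.
Qed.
End DoubleCounting.

Lemma leq_dsum n (d : 'I_n -> nat) (S : {set 'I_n}) v : v \in S -> d v <= dsum d S.
Proof. by move=> vS; rewrite /dsum (bigD1 v vS) leq_addr. Qed.

Lemma dsum_setC n (d : 'I_n -> nat) (S : {set 'I_n}) : dsum d S + dsum d (~: S) = Mtot d.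
Proof.
by rewrite /Mtot (bigID (mem S)) /=; congr (_ + _); apply: eq_bigl => u; rewrite inE.
Qed.

Local Open Scope R_scope.

Lemma ratio_of_sandwich (X Y F alpha beta : R) :
  0 <= alpha <= / 2 -> 0 <= beta -> 0 <= X ->
  F <= X -> X <= F + alpha * X -> F <= Y -> Y <= F + beta * Y ->
  exists eps, Rabs eps <= 2 * alpha + beta /\ X = (1 + eps) * Y.
Proof.
move=> [a0 a2] b0 X0 FX XF FY YF.
have [Y0 | Ynz] := Req_dec Y 0.
  exists 0; split; first by rewrite Rabs_R0; lra.
  by rewrite Y0; nra.
have Ypos : 0 < Y by nra.
have up : X <= Y + 2 * alpha * Y by nra.
have lo : Y - beta * Y <= X by lra.
exists (X / Y - 1); split; last by field.
have XE : X = (1 + (X / Y - 1)) * Y by field.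
move: (X / Y - 1) XE => eps XE; rewrite XE in up lo.
by apply: Rabs_le; split; nra.
Qed.

Lemma ratio_of_counts (a b p q s t D2 F c : R) :
  0 <= a -> 0 < p -> 0 < s -> 0 <= D2 -> 0 < c -> 8 * D2 <= s -> c * s <= t ->
  F <= a * (p * s) -> a * (p * s) <= F + a * (p * (4 * D2)) ->
  F <= b * (q * t) -> b * (q * t) <= F + b * (q * (4 * D2)) ->
  exists eps, Rabs eps <= (8 + 4 / c) * (D2 / s) /\ a = q / p * (t / s) * (1 + eps) * b.
Proof.
move=> a0 p0 s0 D0 c0 small_D large_t F_le_X X_le F_le_Y Y_le.
have t0 : 0 < t by nra.
have [|||||eps [eps_le XE]] := @ratio_of_sandwich (a * (p * s)) (b * (q * t)) F
  (4 * D2 / s) (4 * D2 / t) _ _ _ F_le_X _ F_le_Y.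
- have alpha_s : 4 * D2 / s * s = 4 * D2 by field; lra.
  by split; nra.
- have beta_t : 4 * D2 / t * t = 4 * D2 by field; lra.
  nra.
- by apply: Rmult_le_pos; [|apply: Rmult_le_pos]; lra.
- by rewrite (_ : 4 * D2 / s * _ = a * (p * (4 * D2))) //; field; lra.
- by rewrite (_ : 4 * D2 / t * _ = b * (q * (4 * D2))) //; field; lra.
exists eps; split.
  apply: Rle_trans eps_le _.
  have : 4 * D2 / t <= 4 * D2 / (c * s).
    by apply: Rmult_le_compat_l; [lra | apply: Rinv_le_contravar; nra].
  have -> : (8 + 4 / c) * (D2 / s) = 2 * (4 * D2 / s) + 4 * D2 / (c * s) by field; lra.
  lra.
have -> : a = a * (p * s) / (p * s) by field; lra.
by rewrite XE; field; lra.
Qed.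

Lemma switching_ratio n (d : 'I_n -> nat) (S : {set 'I_n}) v i (c : R) :
  v \in S -> (i < d v)%nat -> 0 < c ->
  8 * INR (Dmax d) ^ 2 <= INR (dsum d S) ->
  c * INR (dsum d S) <= INR (dsum d (~: S)) ->
  exists eps, Rabs eps <= (8 + 4 / c) * (INR (Dmax d) ^ 2 / INR (dsum d S)) /\
    INR #|A_set d S v i| = INR (i + 1) / INR (d v - i)
      * (INR (dsum d (~: S)) / INR (dsum d S)) * (1 + eps) * INR #|A_set d S v i.+1|.
Proof.
move=> vS lt_i c0 small_D large_t.
have [F_le_X X_le] := sum_switchings_bounds (fun G => @card_nbhd_setD n d S v G i).
have [F_le_Y Y_le] := sum_switchings_bounds (fun H => @card_nbhd_setDC n d S v H i.+1).
rewrite -double_count addn1 in F_le_Y Y_le *.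
move: F_le_X X_le F_le_Y Y_le; set F := \sum_(G in _) _.
move=> /leP/le_INR F_le_X /leP/le_INR X_le /leP/le_INR F_le_Y /leP/le_INR Y_le.
rewrite !(mult_INR, plus_INR, pow_INR) in F_le_X X_le F_le_Y Y_le.
rewrite (_ : INR 4 = 4) in X_le Y_le; last by rewrite /=; ring.
have s_pos : 0 < INR (dsum d S).
  by apply/lt_0_INR/ltP; apply: leq_trans (leq_dsum d vS); apply: leq_ltn_trans lt_i.
have p_pos : 0 < INR (d v - i) by apply/lt_0_INR/ltP; rewrite subn_gt0.
exact: ratio_of_counts (pos_INR _) p_pos s_pos (pow2_ge_0 _) c0 small_D large_t
  F_le_X X_le F_le_Y Y_le.
Qed.

Lemma dsum_setC_ge n (d : 'I_n -> nat) (S : {set 'I_n}) c : 0 < c ->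
  (0 < dsum d S)%nat -> INR (dsum d S) / INR (Mtot d) < 1 - c ->
  c * INR (dsum d S) <= INR (dsum d (~: S)).
Proof.
move=> c_pos /ltP/lt_0_INR s_pos; rewrite -(dsum_setC d S) plus_INR.
move: (INR (dsum d (~: S))) (pos_INR (dsum d (~: S))) => t t0.
move: (INR (dsum d S)) s_pos => s s0 lt_c.
have sE : s = s / (s + t) * (s + t) by field; lra.
move: (s / (s + t)) lt_c sE => r lt_c sE; nra.
Qed.

Lemma ln_nonpos x : x <= 0 -> ln x = 0.
Proof. by move=> x_le0; rewrite /ln; case: Rlt_dec => [x_pos|//]; exfalso; lra. Qed.

Lemma ln2_lt1 : ln 2 < 1.
Proof.
rewrite -[X in _ < X](ln_exp 1); apply: ln_increasing; first lra.
by have := exp_ineq1 1 ltac:(lra); lra.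
Qed.

Lemma ln_ge1_of_lnln (M : nat) (K delta : R) : (1 <= M)%nat -> 0 < delta ->
  delta * (Rabs K + 1) < 1 -> / delta <= K * ln (ln (INR M)) -> 1 <= ln (INR M).
Proof.
move=> M_ge1 delta_pos delta_small lnln_big; apply: Rnot_lt_le => lnM_lt1.
(* As [M] is an integer, [ln M < 1] forces [ln (ln M)] into [(ln (1/2), 0]];
   for [M = 1] this uses [ln 0 = 0]. *)
have lnln_le1 : Rabs (ln (ln (INR M))) <= 1.
  have [-> | M_ne1] := eqVneq M 1%nat.
    by rewrite /= ln_1 ln_nonpos ?Rabs_R0; lra.
  have M_ge2 : 2 <= INR M by rewrite -[2]/(INR 2); apply/le_INR/leP; lia.
  have ln2_le : ln 2 <= ln (INR M).
    by case: (Req_dec (INR M) 2) => [->|?]; [lra | apply/Rlt_le/ln_increasing; lra].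
  have := ln_lt_2; have := ln2_lt1 => ln2_lt1 ln2_gt.
  have lo : ln (/ 2) < ln (ln (INR M)) by apply: ln_increasing; lra.
  have hi : ln (ln (INR M)) < ln 1 by apply: ln_increasing; lra.
  by rewrite ln_Rinv ?ln_1 in lo hi; try lra; apply: Rabs_le; lra.
have lnln_le : K * ln (ln (INR M)) <= Rabs K.
  apply: Rle_trans (Rle_abs _) _; rewrite Rabs_mult.
  by have := Rabs_pos K; have := Rabs_pos (ln (ln (INR M))); nra.
have inv_delta_gt : Rabs K + 1 < / delta.
  by apply: (Rmult_lt_reg_l delta) => //; rewrite Rinv_r; lra.
lra.
Qed.

Lemma Dmax_sq_le_dsum n (d : 'I_n -> nat) (S : {set 'I_n}) (K delta : R) :
  (0 < dsum d S)%nat -> 0 < delta -> delta * (Rabs K + 8) <= 1 ->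
  / delta <= K * ln (ln (INR (Mtot d))) ->
  INR (Dmax d) ^ 2 * (INR (Mtot d) / INR (dsum d S) * ln (INR (Mtot d))) ^ 12
    <= delta * INR (dsum d S) ->
  8 * INR (Dmax d) ^ 2 <= INR (dsum d S).
Proof.
move=> s_pos delta_pos delta_small lnln_big Dmax_big.
have s_le_M : (dsum d S <= Mtot d)%nat by rewrite -(dsum_setC d S) leq_addr.
have K_ge0 := Rabs_pos K.
have lnM_ge1 : 1 <= ln (INR (Mtot d)).
  by apply: (ln_ge1_of_lnln (leq_trans s_pos s_le_M) delta_pos _ lnln_big); nra.
have ratio_ge1 : 1 <= INR (Mtot d) / INR (dsum d S).
  have s_posR : 0 < INR (dsum d S) by apply/lt_0_INR/ltP.
  apply: (Rmult_le_reg_r _ _ _ s_posR); rewrite Rmult_1_l /Rdiv Rmult_assoc Rinv_l; last lra.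
  by rewrite Rmult_1_r; apply/le_INR/leP.
have r_ge1 : 1 <= (INR (Mtot d) / INR (dsum d S) * ln (INR (Mtot d))) ^ 12.
  by apply: pow_R1_Rle; nra.
move: Dmax_big r_ge1; set r := (_ ^ 12) => Dmax_big r_ge1.
have D2_ge0 := pow2_ge_0 (INR (Dmax d)); have s_ge0 := pos_INR (dsum d S).
have : INR (Dmax d) ^ 2 <= INR (Dmax d) ^ 2 * r by nra.
have : 8 * delta <= 1 by nra.
nra.
Qed.

Local Close Scope R_scope.

Theorem lemma3p1
  (d : forall n : nat, 'I_n -> nat) (S : forall n : nat, {set 'I_n})
  (Hd : forall n, valid_degseq (d n))
  (* delta(n) -> 0, delta^{-1} = O(log log M), Delta^2 (gamma^{-1} log M)^12 <= delta d(S) *)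
  (Hdelta : exists delta : nat -> R,
      Un_cv delta 0%R /\
      (exists K : R, exists N0 : nat, forall n, (N0 <= n)%N ->
          (0 < delta n)%R /\
          (/ delta n <= K * ln (ln (INR (Mtot (d n)))))%R) /\
      (exists N0 : nat, forall n, (N0 <= n)%N ->
          (INR (Dmax (d n)) ^ 2 *
             (INR (Mtot (d n)) / INR (dsum (d n) (S n)) * ln (INR (Mtot (d n)))) ^ 12
           <= delta n * INR (dsum (d n) (S n)))%R))
  (* gamma = d(S)/M < 1 - c for a constant c > 0 *)
  (Hgamma : exists c : R, (0 < c)%R /\ exists N0 : nat, forall n, (N0 <= n)%N ->
      (INR (dsum (d n) (S n)) / INR (Mtot (d n)) < 1 - c)%R) :
  exists C : R, exists N : nat, forall n, (N <= n)%N ->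
    forall v : 'I_n, v \in S n -> forall i : nat, (i < d n v)%N ->
      exists eps : R,
        (Rabs eps <= C * (INR (Dmax (d n)) ^ 2 / INR (dsum (d n) (S n))))%R /\
        (INR #|A_set (d n) (S n) v i| =
           INR (i + 1) / INR (d n v - i)
           * (INR (dsum (d n) (~: S n)) / INR (dsum (d n) (S n)))
           * (1 + eps) * INR #|A_set (d n) (S n) v i.+1|)%R.
Proof.
case: Hdelta => delta [delta_to0 [[K [N1 lnln_bound]] [N2 Dmax_bound]]].
case: Hgamma => c [c_pos [N3 gamma_bound]].
have [N4 delta_small] : exists N4, forall n, (N4 <= n)%N -> (delta n * (Rabs K + 8) <= 1)%R.
  have K8_pos : (0 < Rabs K + 8)%R by have := Rabs_pos K; lra.
  have [N4 close] := delta_to0 _ (Rinv_0_lt_compat _ K8_pos).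
  exists N4 => n /leP/close; rewrite /R_dist Rminus_0_r => /Rabs_def2[lt_inv _].
  apply: (Rmult_le_reg_r (/ (Rabs K + 8))); first exact: Rinv_0_lt_compat.
  by rewrite Rinv_r_simpl_l; lra.
exists (8 + 4 / c)%R, (N1 + N2 + N3 + N4) => n le_N v vS i lt_i.
have [delta_pos lnln_big] := lnln_bound n ltac:(lia).
have s_pos : (0 < dsum (d n) (S n))%N.
  by apply: leq_trans (leq_dsum (d n) vS); apply: leq_ltn_trans lt_i.
apply: switching_ratio => //.
  exact: Dmax_sq_le_dsum s_pos delta_pos (delta_small n ltac:(lia)) lnln_big
    (Dmax_bound n ltac:(lia)).
exact: dsum_setC_ge c_pos s_pos (gamma_bound n ltac:(lia)).
Qed.
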